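(* Let $(f,g),(f',g')\in\Theta$ with logits $u,u'$, fix $x\in\mathcal X$, and suppose $\min_{y\in\mathcal Y}p_{f,g}(y\mid x)\ge\tau$ for some $0<\tau\le1/3$. Writing $K=\mathrm{KL}(p_{f,g}(\cdot\mid x)\|p_{f',g'}(\cdot\mid x))$, one has $$\|u(x)-u'(x)\|^2\le\frac{12\log(\tau)^2}{\tau}K+\frac{9}{\tau^2}K^2.$$ If in addition $\min_{y\in\mathcal Y}p_{f',g'}(y\mid x)\ge\tau$, then $\|u(x)-u'(x)\|^2\le\frac{4\log(\tau)^2}{\tau}K$.
   Context: Model class $\Theta$: pairs $(f,g)$, $f:\mathcal X\to\mathbb R^m$, $g:\mathcal Y\to\mathbb R^m$, $\mathcal Y=\{y_1,\dots,y_k\}$, with the centering convention $\sum_y g(y)=0$ (same for $g'$), inducing $p_{f,g}(y\mid x)=\exp(f(x)^\top g(y))/\sum_{y'}\exp(f(x)^\top g(y'))$. Logits $u(x)_i=f(x)^\top g(y_i)$, $u'(x)_i=f'(x)^\top g'(y_i)$. *)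

From HB Require Import structures.
From mathcomp Require Import all_boot all_order all_algebra.
From mathcomp Require Import all_classical all_reals all_analysis.
Set Implicit Arguments. Unset Strict Implicit. Unset Printing Implicit Defensive.
Import Order.TTheory GRing.Theory Num.Theory.
Local Open Scope ring_scope.

(* Labels Y = {y_1,...,y_k} are indexed by 'I_k; embeddings live in R^m
   (row vectors). *)

Definition centered (R : realType) (m k : nat) (g : 'I_k -> 'rV[R]_m) : Prop :=
  \sum_(i < k) g i = 0.

Definition logit (R : realType) (X : Type) (m k : nat)
  (f : X -> 'rV[R]_m) (g : 'I_k -> 'rV[R]_m) (x : X) (i : 'I_k) : R :=
  \sum_(j < m) f x 0 j * g i 0 j.

Definition pmodel (R : realType) (X : Type) (m k : nat)
  (f : X -> 'rV[R]_m) (g : 'I_k -> 'rV[R]_m) (x : X) (i : 'I_k) : R :=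
  expR (logit f g x i) / \sum_(j < k) expR (logit f g x j).

Definition KL (R : realType) (k : nat) (p q : 'I_k -> R) : R :=
  \sum_(i < k) p i * ln (p i / q i).

Definition sqdist (R : realType) (k : nat) (u v : 'I_k -> R) : R :=
  \sum_(i < k) (u i - v i) ^+ 2.

(* Write p, q for the two softmax distributions and r i := ln (p i / q i).
   Since q i = p i * exp (- r i) and both sum to one,
   KL(p || q) = sum_i p i * phi (r i) with phi r := exp (- r) - 1 + r >= 0,
   so the lower bound tau on p gives sum_i phi (r i) <= K / tau.  On the other
   hand r i differs from u i - u' i by a constant, and u - u' is centered, so
   ||u - u'||^2 <= sum_i r i ^ 2.  It remains to bound r ^ 2 pointwise by phi r:
   r ^ 2 <= 4 phi r + 9 phi r ^ 2 always, and r ^ 2 <= 4 L ^ 2 phi r when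
   r <= L := - ln tau, which is the case when q is also bounded below by tau. *)

From HB Require Import structures.
From mathcomp Require Import all_boot all_order all_algebra.
From mathcomp Require Import all_classical all_reals all_analysis.
From mathcomp Require Import ring lra.
Set Implicit Arguments. Unset Strict Implicit. Unset Printing Implicit Defensive.
Import Order.TTheory GRing.Theory Num.Theory.
Local Open Scope ring_scope.

Section ExpGap.
Variable R : realType.
Implicit Types r L tau : R.

Definition expR_gap r : R := expR (- r) - 1 + r.

Lemma expR_gap_ge0 r : 0 <= expR_gap r.
Proof. have := expR_ge1Dx (- r); rewrite /expR_gap; lra. Qed.

Lemma expR_gap_gtBr1 r : r - 1 < expR_gap r.
Proof. have := expR_gt0 (- r); rewrite /expR_gap; lra. Qed.

(* Apply 1 + x <= exp x at x = - r / 2 and square. *)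
Lemma sqr_le_expR_gap r : r <= 2 -> r ^+ 2 <= 4 * expR_gap r.
Proof.
move=> r_le2; rewrite /expR_gap.
have -> : - r = - (r / 2) + - (r / 2) by field.
rewrite expRD.
have half_le := expR_ge1Dx (- (r / 2)).
have : (1 - r / 2) * (1 - r / 2) <= expR (- (r / 2)) * expR (- (r / 2)).
  by apply: ler_pM; lra.
nra.
Qed.

Lemma sqr_le_expR_gap_quad r : r ^+ 2 <= 4 * expR_gap r + 9 * expR_gap r ^+ 2.
Proof.
have gap_ge0 := expR_gap_ge0 r.
have [r_le2|r_gt2] := lerP r 2; first by have := sqr_le_expR_gap r_le2; nra.
have r_le : r <= 3 * expR_gap r by have := expR_gap_gtBr1 r; lra.
have : r * r <= (3 * expR_gap r) * (3 * expR_gap r) by apply: ler_pM; lra.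
nra.
Qed.

Lemma sqr_le_expR_gap_bounded r L :
  1 <= L -> r <= L -> r ^+ 2 <= 4 * L ^+ 2 * expR_gap r.
Proof.
move=> L_ge1 r_leL; have gap_ge0 := expR_gap_ge0 r.
have [r_le2|r_gt2] := lerP r 2.
  have := sqr_le_expR_gap r_le2.
  have : 0 <= (L ^+ 2 - 1) * expR_gap r by apply: mulr_ge0; nra.
  nra.
have gap_gt := expR_gap_gtBr1 r.
have h1 : r * r <= L * r by apply: ler_wpM2r; lra.
have h2 : L * r <= L * L * r by apply: ler_wpM2r; nra.
have : 0 <= L * L * (expR_gap r - r / 2) by apply: mulr_ge0; nra.
rewrite expr2; nra.
Qed.

(* (5/6)^6 > 1/3, and 5/6 <= exp (-1/6). *)
Lemma third_le_expRN1 : 1 / 3 <= expR (-1) :> R.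
Proof.
have -> : expR (-1) = expR (- (1 / 6)) ^+ 6 :> R.
  by rewrite -expRM_natl; congr expR; field.
apply: (@le_trans _ _ ((1 - 1 / 6) ^+ 6)); first by rewrite !exprS expr0; lra.
apply: lerXn2r; rewrite ?nnegrE ?expR_ge0 //; first lra.
exact: expR_ge1Dx.
Qed.

Lemma Nln_ge1 tau : 0 < tau -> tau <= 1 / 3 -> 1 <= - ln tau.
Proof.
move=> tau_gt0 tau_le; have := le_trans tau_le third_le_expRN1.
rewrite -ler_ln ?posrE ?expR_gt0 // expRK; lra.
Qed.

End ExpGap.

Section Sums.
Variables (R : realType) (k : nat).
Implicit Types d a : 'I_k -> R.

Lemma sum_sqr_le_shift d c : \sum_(i < k) d i = 0 ->
  \sum_(i < k) d i ^+ 2 <= \sum_(i < k) (d i - c) ^+ 2.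
Proof.
move=> d_centered; rewrite -subr_ge0 -sumrB.
have -> : \sum_(i < k) ((d i - c) ^+ 2 - d i ^+ 2)
    = \sum_(i < k) c ^+ 2 - 2 * c * \sum_(i < k) d i.
  by rewrite mulr_sumr -sumrB; apply: eq_bigr => i _; ring.
by rewrite d_centered mulr0 subr0; apply: sumr_ge0 => i _; exact: sqr_ge0.
Qed.

Lemma sum_sqr_le_sqr_sum a : (forall i, 0 <= a i) ->
  \sum_(i < k) a i ^+ 2 <= (\sum_(i < k) a i) ^+ 2.
Proof.
move=> a_ge0; rewrite expr2 mulr_suml; apply: ler_sum => i _.
rewrite expr2 ler_wpM2l // (bigD1 i) //= lerDl.
by apply: sumr_ge0 => j _.
Qed.

End Sums.

Section Softmax.
Variables (R : realType) (k : nat).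
Implicit Types u : 'I_k -> R.

Definition softmax u (i : 'I_k) : R := expR (u i) / \sum_(j < k) expR (u j).

Lemma expR_le_sum_expR u i : expR (u i) <= \sum_(j < k) expR (u j).
Proof. by rewrite (bigD1 i) //= lerDl; apply: sumr_ge0 => j _; exact: expR_ge0. Qed.

Lemma sum_expR_gt0 u (i : 'I_k) : 0 < \sum_(j < k) expR (u j).
Proof. exact: lt_le_trans (expR_gt0 _) (expR_le_sum_expR u i). Qed.

Lemma softmax_gt0 u i : 0 < softmax u i.
Proof. by rewrite divr_gt0 ?expR_gt0 ?(sum_expR_gt0 u i). Qed.

Lemma softmax_le1 u i : softmax u i <= 1.
Proof. by rewrite ler_pdivrMr ?(sum_expR_gt0 u i) // mul1r expR_le_sum_expR. Qed.

Lemma sum_softmax u : \sum_(i < k) softmax u i = (0 < k)%N%:R.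
Proof.
have [k0|k_gt0] := posnP k.
  by apply: big1 => i; exfalso; move: (ltn_ord i); rewrite [X in (_ < X)%N]k0.
rewrite -mulr_suml mulfV //.
by rewrite gt_eqF // (sum_expR_gt0 u (Ordinal k_gt0)).
Qed.

Lemma ln_softmax u i : ln (softmax u i) = u i - ln (\sum_(j < k) expR (u j)).
Proof. by rewrite ln_div ?posrE ?expR_gt0 ?(sum_expR_gt0 u i) // expRK. Qed.

End Softmax.

Section SoftmaxKL.
Variables (R : realType) (k : nat) (u u' : 'I_k -> R).

Local Notation p := (softmax u).
Local Notation q := (softmax u').
Local Notation logratio i := (ln (p i / q i)).

Lemma softmax_logratio i : p i * expR (- logratio i) = q i.
Proof.
have [p_gt0 q_gt0] := (softmax_gt0 u i, softmax_gt0 u' i).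
rewrite ln_div ?posrE // opprB expRB !lnK ?posrE //.
by rewrite mulrC divfK // gt_eqF.
Qed.

Lemma KL_softmax_expR_gap : KL p q = \sum_(i < k) p i * expR_gap (logratio i).
Proof.
have -> : \sum_(i < k) p i * expR_gap (logratio i)
    = \sum_(i < k) q i - \sum_(i < k) p i + \sum_(i < k) p i * logratio i.
  rewrite -sumrB -big_split /=; apply: eq_bigr => i _.
  by rewrite /expR_gap; move: (softmax_logratio i); set r := ln _ => <-; ring.
by rewrite !sum_softmax subrr add0r.
Qed.

Lemma sum_expR_gap_le_KL tau : 0 < tau -> (forall i, tau <= p i) ->
  \sum_(i < k) expR_gap (logratio i) <= KL p q / tau.
Proof.
move=> tau_gt0 p_ge; rewrite ler_pdivlMr // mulr_suml KL_softmax_expR_gap.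
by apply: ler_sum => i _; rewrite mulrC ler_wpM2r ?expR_gap_ge0.
Qed.

Lemma logratio_le_Nln tau : 0 < tau -> (forall i, tau <= q i) ->
  forall i, logratio i <= - ln tau.
Proof.
move=> tau_gt0 q_ge i; have [p_gt0 q_gt0] := (softmax_gt0 u i, softmax_gt0 u' i).
have ratio_gt0 : 0 < p i / q i by exact: divr_gt0.
rewrite -lnV ?posrE // ler_ln ?posrE ?invr_gt0 //.
rewrite ler_pdivrMr //; apply: le_trans (softmax_le1 u i) _.
by rewrite mulrC ler_pdivlMr // mul1r q_ge.
Qed.

Lemma sqdist_le_sum_sqr_logratio :
  \sum_(i < k) u i = 0 -> \sum_(i < k) u' i = 0 ->
  sqdist u u' <= \sum_(i < k) logratio i ^+ 2.
Proof.
move=> u_centered u'_centered.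
set c := ln (\sum_(j < k) expR (u j)) - ln (\sum_(j < k) expR (u' j)).
have -> : \sum_(i < k) logratio i ^+ 2 = \sum_(i < k) (u i - u' i - c) ^+ 2.
  apply: eq_bigr => i _; have [p_gt0 q_gt0] := (softmax_gt0 u i, softmax_gt0 u' i).
  by rewrite ln_div ?posrE // !ln_softmax /c; congr (_ ^+ 2); ring.
by apply: sum_sqr_le_shift; rewrite sumrB u_centered u'_centered subrr.
Qed.

Section Bounds.
Variable tau : R.
Hypotheses (u_centered : \sum_(i < k) u i = 0) (u'_centered : \sum_(i < k) u' i = 0).
Hypotheses (tau_gt0 : 0 < tau) (tau_le : tau <= 1 / 3).
Hypothesis p_ge : forall i, tau <= p i.

Lemma sqdist_softmax_le_KL :
  sqdist u u' <= 12 * ln tau ^+ 2 / tau * KL p q + 9 / tau ^+ 2 * KL p q ^+ 2.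
Proof.
apply: le_trans (sqdist_le_sum_sqr_logratio u_centered u'_centered) _.
set S := \sum_(i < k) expR_gap (logratio i).
set B := KL p q / tau.
have S_le : S <= B by exact: sum_expR_gap_le_KL.
have S_ge0 : 0 <= S by apply: sumr_ge0 => i _; exact: expR_gap_ge0.
have sqr_sum_le : \sum_(i < k) expR_gap (logratio i) ^+ 2 <= S ^+ 2.
  by apply: sum_sqr_le_sqr_sum => i; exact: expR_gap_ge0.
have L_ge1 := Nln_ge1 tau_gt0 tau_le.
have -> : 12 * ln tau ^+ 2 / tau * KL p q + 9 / tau ^+ 2 * KL p q ^+ 2
    = 12 * (- ln tau) ^+ 2 * B + 9 * B ^+ 2.
  by rewrite sqrrN /B; field; exact: lt0r_neq0.
apply: (le_trans (ler_sum _ (fun i _ => sqr_le_expR_gap_quad (logratio i)))).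
rewrite big_split /= -!mulr_sumr -/S.
set L := - ln tau in L_ge1 *.
have : S * S <= B * B by apply: ler_pM.
have : 0 <= L * L * (B - S) by apply: mulr_ge0; nra.
have : 0 <= (L * L - 1) * S by apply: mulr_ge0; nra.
rewrite !expr2 in sqr_sum_le *; lra.
Qed.

Hypothesis q_ge : forall i, tau <= q i.

Lemma sqdist_softmax_le_KL_both : sqdist u u' <= 4 * ln tau ^+ 2 / tau * KL p q.
Proof.
apply: le_trans (sqdist_le_sum_sqr_logratio u_centered u'_centered) _.
have L_ge1 := Nln_ge1 tau_gt0 tau_le.
apply: (le_trans (ler_sum _ (fun i _ => sqr_le_expR_gap_bounded L_ge1
  (logratio_le_Nln tau_gt0 q_ge i)))).
have -> : 4 * ln tau ^+ 2 / tau * KL p q = 4 * (- ln tau) ^+ 2 * (KL p q / tau).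
  by rewrite sqrrN -!mulrA (mulrC tau^-1).
rewrite -mulr_sumr ler_wpM2l ?sum_expR_gap_le_KL //.
by rewrite mulr_ge0 ?sqr_ge0.
Qed.

End Bounds.
End SoftmaxKL.

Lemma sum_logit_centered (R : realType) (X : Type) (m k : nat)
  (f : X -> 'rV[R]_m) (g : 'I_k -> 'rV[R]_m) (x : X) :
  centered g -> \sum_(i < k) logit f g x i = 0.
Proof.
move=> g_centered; rewrite /logit exchange_big /=.
apply: big1 => j _; rewrite -mulr_sumr.
have : (\sum_(i < k) g i) 0 j = 0 by rewrite g_centered mxE.
by rewrite summxE => ->; rewrite mulr0.
Qed.

Theorem mainTheorem18 (R : realType) (X : Type) (m k : nat)
  (f f' : X -> 'rV[R]_m) (g g' : 'I_k -> 'rV[R]_m)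
  (hg : centered g) (hg' : centered g') (x : X) (tau : R)
  (htau0 : 0 < tau) (htau1 : tau <= 1 / 3)
  (hmin : forall y : 'I_k, tau <= pmodel f g x y) :
  let K := KL (pmodel f g x) (pmodel f' g' x) in
  sqdist (logit f g x) (logit f' g' x)
    <= 12 * (ln tau) ^+ 2 / tau * K + 9 / tau ^+ 2 * K ^+ 2
  /\ ((forall y : 'I_k, tau <= pmodel f' g' x y) ->
      sqdist (logit f g x) (logit f' g' x) <= 4 * (ln tau) ^+ 2 / tau * K).
Proof.
have u_centered := sum_logit_centered f x hg.
have u'_centered := sum_logit_centered f' x hg'.
split; first exact: sqdist_softmax_le_KL u_centered u'_centered htau0 htau1 hmin.
exact: sqdist_softmax_le_KL_both u_centered u'_centered htau0 htau1 hmin.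
Qed.
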